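(* Let $L$ be a finite-dimensional Lie algebra over a field $F$ and let $M$ be a maximal subalgebra of $L$. Then the index complex $I(M)$ is non-empty; in fact, $I(M)$ contains an ideal of $L$.
   Context: For a nonzero subalgebra $B$ of $L$, the strict core $k(B)=k_L(B)$ is the sum of all ideals of $L$ that are proper subalgebras of $B$ (it is $0$ if there are none). A subalgebra $C$ of $L$ is a completion of the maximal subalgebra $M$ if $C\not\subseteq M$ but every proper subalgebra of $C$ that is an ideal of $L$ is contained in $M$ (equivalently, $C\not\subseteq M$ and $k(C)\subseteq M$). The index complex $I(M)$ is the set of all completions of $M$ in $L$. *)

From HB Require Import structures.
From mathcomp Require Import all_boot all_algebra.
Set Implicit Arguments. Unset Strict Implicit. Unset Printing Implicit Defensive.
Import GRing.Theory.
Local Open Scope ring_scope.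

Definition lie_bracket (F : fieldType) (L : vectType F) (br : L -> L -> L) :=
  [/\ (forall (a : F) (x y z : L), br (a *: x + y) z = a *: br x z + br y z),
      (forall (a : F) (x y z : L), br z (a *: x + y) = a *: br z x + br z y),
      (forall x : L, br x x = 0)
    & (forall x y z : L, br x (br y z) + br y (br z x) + br z (br x y) = 0)].

Definition subalg (F : fieldType) (L : vectType F) (br : L -> L -> L)
  (U : {vspace L}) := forall x y, x \in U -> y \in U -> br x y \in U.

Definition lie_ideal (F : fieldType) (L : vectType F) (br : L -> L -> L)
  (U : {vspace L}) := forall x y, y \in U -> br x y \in U.

Definition max_subalg (F : fieldType) (L : vectType F) (br : L -> L -> L)
  (M : {vspace L}) :=
  [/\ subalg br M, M != fullv
    & forall S : {vspace L}, subalg br S -> (M <= S)%VS -> S = M \/ S = fullv].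

Definition completion (F : fieldType) (L : vectType F) (br : L -> L -> L)
  (M C : {vspace L}) :=
  [/\ subalg br C, ~~ (C <= M)%VS
    & forall I : {vspace L}, subalg br I -> lie_ideal br I ->
        (I <= C)%VS -> I != C -> (I <= M)%VS].

Definition index_complex (F : fieldType) (L : vectType F) (br : L -> L -> L)
  (M : {vspace L}) : {vspace L} -> Prop := fun C => completion br M C.

From HB Require Import structures.
From mathcomp Require Import all_boot all_algebra.
From Stdlib Require Import Classical.

Set Implicit Arguments.
Unset Strict Implicit.

(* An ideal of L not contained in M exists (L itself, as M <> L); one of
   minimal dimension is a completion of M, since each of its proper
   subideals, having smaller dimension, must lie in M. *)

Section Completions.

Variables (F : fieldType) (L : vectType F) (br : L -> L -> L).

Lemma lie_ideal_subalg (U : {vspace L}) : lie_ideal br U -> subalg br U.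
Proof. by move=> idU x y _; apply: idU. Qed.

Lemma lie_ideal_fullv : lie_ideal br fullv.
Proof. by move=> x y _; rewrite memvf. Qed.

Lemma lie_ideal_sub_completion (M C : {vspace L}) :
  lie_ideal br C -> ~~ (C <= M)%VS ->
  exists C', [/\ completion br M C', lie_ideal br C' & (C' <= C)%VS].
Proof.
elim: {C}(\dim C).+1 {-2}C (ltnSn (\dim C)) => // n IHn C dimC idC CnM.
have [[I [idI IC InC InM]] | noI] := classic (exists I : {vspace L},
    [/\ lie_ideal br I, (I <= C)%VS, I != C & ~~ (I <= M)%VS]).
  have dimI : (\dim I < \dim C)%N.
    by rewrite ltnNge; apply: contra InC => dimCI; rewrite eqEdim IC.
  have [C' [complC' idC' C'I]] := IHn I (leq_trans dimI dimC) idI InM.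
  by exists C'; split=> //; apply: subv_trans IC.
exists C; split=> //; split=> //; first exact: lie_ideal_subalg.
move=> I _ idI IC InC; apply/negPn/negP => InM.
by apply: noI; exists I.
Qed.

End Completions.

Theorem lemma1p1 (F : fieldType) (L : vectType F) (br : L -> L -> L)
  (Hbr : lie_bracket br) (M : {vspace L}) (HM : max_subalg br M) :
  (exists C, index_complex br M C) /\
  (exists C, index_complex br M C /\ lie_ideal br C).
Proof.
case: HM => _ MnL _.
have LnM : ~~ (fullv <= M)%VS by apply: contra MnL => LM; rewrite eqEsubv subvf.
have [C [complC idC _]] := lie_ideal_sub_completion (lie_ideal_fullv br) LnM.
by split; exists C.
Qed.
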